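(* Let $\Lambda$ be a set and let $(\mathcal{X},\preceq)$ be a poset in which every nonempty chain has an infimum. If $(\mathcal{X},\preceq)$ is a complete partially ordered set, then the $\Lambda$-system algebra of monotone systems over $\mathcal{X}$ is composition-order invariant; and if $(\mathcal{X},\preceq)$ is an $\omega$-chain complete partially ordered set, then the $\Lambda$-system algebra of continuous systems over $\mathcal{X}$ is composition-order invariant.
   Context: A CPO is a poset in which every chain (including the empty one) has a supremum; an $\omega$-CPO is a poset with least element in which every $\omega$-chain (sequence $(x_n)_{n\in\mathbb{N}}$ with $x_i\preceq x_j$ for $i\le j$) has a supremum. $\mathcal{X}^{\mathcal{I}}$ (functions $\mathcal{I}\to\mathcal{X}$) is ordered componentwise. A function is $\omega$-continuous if it maps suprema of $\omega$-chains to suprema of the image. The $\Lambda$-system algebra of monotone (resp. continuous) systems over $\mathcal{X}$ has as systems all monotone (resp. $\omega$-continuous) functions $s:\mathcal{X}^{\mathcal{I}}\to\mathcal{X}^{\mathcal{O}}$ for finite disjoint $\mathcal{I},\mathcal{O}\subseteq\Lambda$, with $\lambda(s)=\mathcal{I}\cup\mathcal{O}$; $\Gamma(s)=\{\{i,o\}\mid i\in\mathcal{I},o\in\mathcal{O}\}$; parallel composition $(s_1\parallel s_2)(\mathbf{x})(o_j)=s_j(\mathbf{x}|_{\mathcal{I}_j})(o_j)$ for $s_j:\mathcal{X}^{\mathcal{I}_j}\to\mathcal{X}^{\mathcal{O}_j}$ with $\mathcal{I}_1,\mathcal{I}_2,\mathcal{O}_1,\mathcal{O}_2$ pairwise disjoint;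 and interface connection $\gamma_{i,o}(s)(\mathbf{x})=s(\mathbf{x}\cup\{(i,x^* )\})|_{\mathcal{O}\setminus\{o\}}$ for $\mathbf{x}\in\mathcal{X}^{\mathcal{I}\setminus\{i\}}$, where $x^*$ is the least $x_i\in\mathcal{X}$ with $s(\mathbf{x}\cup\{(i,x_i)\})(o)=x_i$. Composition-order invariance means: (i) for all $s$, $\{i,o\}\in\Gamma(s)$, $\{i',o'\}\in\Gamma(\gamma_{i,o}(s))$ we have $\{i',o'\}\in\Gamma(s)$, $\{i,o\}\in\Gamma(\gamma_{i',o'}(s))$ and $\gamma_{i',o'}(\gamma_{i,o}(s))=\gamma_{i,o}(\gamma_{i',o'}(s))$; (ii) $\parallel$ is associative and commutative; (iii) $\gamma_{i,o}(s_1)\parallel s_2=\gamma_{i,o}(s_1\parallel s_2)$ whenever $\lambda(s_1)\cap\lambda(s_2)=\emptyset$ and $\{i,o\}\in\Gamma(s_1)$. *)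

From mathcomp Require Import all_boot finmap.
From Stdlib Require Import ClassicalEpsilon.

Set Implicit Arguments.
Unset Strict Implicit.
Unset Printing Implicit Defensive.

Local Open Scope fset_scope.

Section Order.
Variables (X : Type) (le : X -> X -> Prop).

Definition is_poset : Prop :=
  (forall x, le x x) /\
  (forall x y, le x y -> le y x -> x = y) /\
  (forall x y z, le x y -> le y z -> le x z).

Definition is_chain (C : X -> Prop) : Prop :=
  forall x y, C x -> C y -> le x y \/ le y x.

Definition is_sup (C : X -> Prop) (s : X) : Prop :=
  (forall x, C x -> le x s) /\ (forall u, (forall x, C x -> le x u) -> le s u).

Definition is_inf (C : X -> Prop) (m : X) : Prop :=
  (forall x, C x -> le m x) /\ (forall u, (forall x, C x -> le u x) -> le u m).

Definition nonempty_chain_inf : Prop :=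
  forall C, is_chain C -> (exists x, C x) -> exists m, is_inf C m.

(* CPO: every chain (including the empty one) has a supremum *)
Definition is_CPO : Prop :=
  forall C, is_chain C -> exists s, is_sup C s.

Definition is_omega_chain (c : nat -> X) : Prop :=
  forall i j : nat, (i <= j)%N -> le (c i) (c j).

Definition is_omegaCPO : Prop :=
  (exists b, forall x, le b x) /\
  (forall c, is_omega_chain c -> exists s, is_sup (fun x => exists n, x = c n) s).

Definition is_lfp (f : X -> X) (x : X) : Prop :=
  f x = x /\ forall y, f y = y -> le x y.

End Order.

Definition lef (A : Type) (X : Type) (le : X -> X -> Prop) (f g : A -> X) : Prop :=
  forall a, le (f a) (g a).

Definition monotone_fun (A B X : Type) (le : X -> X -> Prop) (F : (A -> X) -> (B -> X)) :=
  forall x y, lef le x y -> lef le (F x) (F y).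

Definition omega_continuous_fun (A B X : Type) (le : X -> X -> Prop)
    (F : (A -> X) -> (B -> X)) :=
  forall (c : nat -> A -> X), is_omega_chain (lef le) c ->
  forall s, is_sup (lef le) (fun x => exists n, x = c n) s ->
    is_sup (lef le) (fun y => exists n, y = F (c n)) (F s).

(* X^I is represented as functions on the finite subtype of I.         *)
Record system (L : choiceType) (X : Type) := Sys {
  sI : {fset L};
  sO : {fset L};
  sf : (sI -> X) -> (sO -> X) }.
Arguments sI {L X} s.
Arguments sO {L X} s.
Arguments sf {L X} s _ _.

Section Systems.
Variables (L : choiceType) (X : Type) (le : X -> X -> Prop).

Lemma memD1 (A : {fset L}) (b a : L) : a \in A `\ b -> a \in A.
Proof. by rewrite in_fsetD1 => /andP[]. Qed.

Lemma memUl (A B : {fset L}) (a : L) : a \in A -> a \in A `|` B.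
Proof. by rewrite in_fsetU => ->. Qed.

Lemma memUr (A B : {fset L}) (a : L) : a \in B -> a \in A `|` B.
Proof. by rewrite in_fsetU => ->; rewrite orbT. Qed.

Lemma memU_notl (A B : {fset L}) (a : L) :
  a \in A `|` B -> (a \in A) = false -> a \in B.
Proof. by rewrite in_fsetU => /orP[->|]. Qed.

Definition lam (s : system L X) : {fset L} := sI s `|` sO s.

Definition inGamma (s : system L X) (i o : L) : Prop := i \in sI s /\ o \in sO s.

Definition monotone_sys (s : system L X) : Prop :=
  [disjoint sI s & sO s] /\ monotone_fun le (sf s).

Definition continuous_sys (s : system L X) : Prop :=
  [disjoint sI s & sO s] /\ omega_continuous_fun le (sf s).

(* x u {(i, v)} for x in X^(I \ {i}) *)
Definition ext (I : {fset L}) (i : L) (x : (I `\ i) -> X) (v : X) : I -> X :=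
  fun j => match (insub (fsval j) : option (I `\ i)) with
           | Some k => x k
           | None => v
           end.

Definition restrD1 (O : {fset L}) (o : L) (y : O -> X) : (O `\ o) -> X :=
  fun k => y [` memD1 (fsvalP k)].

(* the least fixed point of f if it exists; the junk value x0 otherwise *)
Definition lfp_or (x0 : X) (f : X -> X) : X :=
  match excluded_middle_informative (exists x, is_lfp le f x) with
  | left h => proj1_sig (constructive_indefinite_description _ h)
  | right _ => x0
  end.

(* interface connection gamma_{i,o}; x0 is only used outside the
   situations where the least fixed point exists *)
Definition gamma (x0 : X) (s : system L X) (i o : L) : system L X :=
  @Sys L X (sI s `\ i) (sO s `\ o) (fun x =>
    let xstar :=
      match (insub o : option (sO s)) with
      | Some o' => lfp_or x0 (fun v => sf s (ext x v) o')
      | None => x0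
      end in
    restrD1 (sf s (ext x xstar))).

Definition resl (A B : {fset L}) (x : (A `|` B) -> X) : A -> X :=
  fun j => x [` memUl B (fsvalP j)].

Definition resr (A B : {fset L}) (x : (A `|` B) -> X) : B -> X :=
  fun j => x [` memUr A (fsvalP j)].

(* case split of an element of A u B (left part takes priority) *)
Definition splitU (A B : {fset L}) (k : A `|` B) : A + B :=
  match (fsval k \in A) as b return (fsval k \in A) = b -> A + B with
  | true => fun h => inl [` h]
  | false => fun h => inr [` memU_notl (fsvalP k) h]
  end erefl.

Definition par (s1 s2 : system L X) : system L X :=
  @Sys L X (sI s1 `|` sI s2) (sO s1 `|` sO s2) (fun x k =>
    match splitU k with
    | inl k1 => sf s1 (resl x) k1
    | inr k2 => sf s2 (resr x) k2
    end).

Definition composition_order_invariant (x0 : X) (P : system L X -> Prop) : Prop :=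
  (forall s, P s -> forall i o i' o',
     inGamma s i o -> inGamma (gamma x0 s i o) i' o' ->
     [/\ inGamma s i' o', inGamma (gamma x0 s i' o') i o &
         gamma x0 (gamma x0 s i o) i' o' = gamma x0 (gamma x0 s i' o') i o])
  /\
  (forall s1 s2, P s1 -> P s2 -> [disjoint lam s1 & lam s2] ->
     par s1 s2 = par s2 s1)
  /\
  (forall s1 s2 s3, P s1 -> P s2 -> P s3 ->
     [disjoint lam s1 & lam s2] -> [disjoint lam s1 & lam s3] ->
     [disjoint lam s2 & lam s3] ->
     par (par s1 s2) s3 = par s1 (par s2 s3))
  /\
  (forall s1 s2 i o, P s1 -> P s2 -> [disjoint lam s1 & lam s2] ->
     inGamma s1 i o ->
     par (gamma x0 s1 i o) s2 = gamma x0 (par s1 s2) i o).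

End Systems.

From mathcomp Require Import all_boot finmap.
From mathcomp Require boolp classical_sets.
From Stdlib Require Import ClassicalEpsilon FunctionalExtensionality.

(* Interface connection feeds an output back into an input through a least
   fixed point.  Closing two loops in either order yields, by Bekic's lemma,
   the least fixed point of the joint map on pairs, so the order is
   irrelevant.  The required least fixed points exist for monotone maps on a
   CPO (a Zorn-maximal post-fixed point lying below all prefixed points) and
   for continuous maps on an omega-CPO (Kleene iteration), and the joint map
   inherits monotonicity resp. continuity from the system.  The laws of
   parallel composition are bookkeeping on disjoint unions of interfaces. *)

Set Implicit Arguments.
Unset Strict Implicit.
Unset Printing Implicit Defensive.

Local Notation range c := (fun x => exists n : nat, x = c n).

Section LeastFixpoints.
Variables (Y : Type) (le : Y -> Y -> Prop).
Hypothesis po : is_poset le.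

Let le_refl : forall x, le x x := proj1 po.
Let le_anti : forall x y, le x y -> le y x -> x = y := proj1 (proj2 po).
Let le_trans : forall x y z, le x y -> le y z -> le x z := proj2 (proj2 po).

Definition is_least_prefp (F : Y -> Y) (a : Y) :=
  F a = a /\ forall y, le (F y) y -> le a y.

Definition has_least_prefp (F : Y -> Y) := exists a, is_least_prefp F a.

Lemma lfp_or_least_prefp x0 F a : is_least_prefp F a -> lfp_or le x0 F = a.
Proof.
move=> [Fa a_least]; have a_lfp : is_lfp le F a.
  by split=> // y Fy; apply: a_least; rewrite Fy.
rewrite /lfp_or; case: excluded_middle_informative => [h|[]]; last by exists a.
case: (constructive_indefinite_description _ h) => z [Fz z_least] /=.
by apply: le_anti; [apply: z_least | apply: a_lfp.2].
Qed.

Section Monotone.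
Variable F : Y -> Y.
Hypothesis F_mono : forall x y, le x y -> le (F x) (F y).

(* The elements below every prefixed point that F does not decrease; this set
   is closed under F and under suprema of chains, so a Zorn-maximal element
   of it is the least prefixed point. *)
Definition below_prefp (x : Y) := le x (F x) /\ forall y, le (F y) y -> le x y.

Lemma below_prefp_F x : below_prefp x -> below_prefp (F x).
Proof.
move=> [xFx x_below]; split; first exact: F_mono.
by move=> y Fy; apply: le_trans (F_mono (x_below _ Fy)) Fy.
Qed.

Lemma below_prefp_sup C s : (forall x, C x -> below_prefp x) ->
  is_sup le C s -> below_prefp s.
Proof.
move=> C_below [s_ub s_least]; split.
  by apply: s_least => x Cx; apply: le_trans (C_below x Cx).1 (F_mono (s_ub x Cx)).
by move=> y Fy; apply: s_least => x Cx; apply: (C_below x Cx).2.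
Qed.

Lemma CPO_least_prefp : is_CPO le -> has_least_prefp F.
Proof.
move=> cpo; pose T := {x | below_prefp x}.
pose R (s t : T) := boolp.asbool (le (proj1_sig s) (proj1_sig t)).
have Rle s t : R s t <-> le (proj1_sig s) (proj1_sig t) by split => /boolp.asboolP.
have [[m m_below] m_max] : exists t : T, forall s, R t s -> s = t.
  apply: classical_sets.Zorn.
  - by move=> s; apply/Rle.
  - by move=> r s t /Rle rs /Rle st; apply/Rle; apply: le_trans rs st.
  - move=> [s ?] [t ?] /Rle st /Rle ts; apply: boolp.eq_exist; exact: le_anti.
  - move=> A A_total; pose C x := exists t, A t /\ proj1_sig t = x.
    have [|s s_sup] := cpo C.
      move=> _ _ [t [At <-]] [t' [At' <-]].
      by case: (A_total t t' At At') => /Rle; [left|right].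
    have s_below : below_prefp s.
      by apply: below_prefp_sup s_sup => _ [[x x_below] [_ <-]].
    exists (exist _ s s_below) => t At; apply/Rle; apply: s_sup.1; by exists t.
have Fm_below := below_prefp_F m_below.
have /m_max [Fm] : R (exist _ m m_below) (exist _ (F m) Fm_below).
  by apply/Rle; exact: m_below.1.
by exists m; split; [rewrite Fm | exact: m_below.2].
Qed.

End Monotone.

Lemma omegaCPO_least_prefp F b :
  (forall x y, le x y -> le (F x) (F y)) -> (forall y, le b y) ->
  (forall c, is_omega_chain le c -> exists s, is_sup le (range c) s) ->
  (forall c, is_omega_chain le c -> forall s, is_sup le (range c) s ->
     is_sup le (range (fun n => F (c n))) (F s)) ->
  has_least_prefp F.
Proof.
move=> F_mono b_bot sups F_cont; pose c n := iter n F b.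
have c_step n : le (c n) (c n.+1).
  by elim: n => [|n IH]; [apply: b_bot | apply: F_mono].
have c_chain : is_omega_chain le c.
  move=> i j /subnKC <-; elim: (j - i) => [|k IH]; first by rewrite addn0.
  by rewrite addnS; apply: le_trans IH (c_step _).
have [s s_sup] := sups c c_chain; have [Fs_ub Fs_least] := F_cont c c_chain s s_sup.
have Fs_le_s : le (F s) s.
  by apply: Fs_least => _ [n ->]; apply: s_sup.1; exists n.+1.
have s_le_Fs : le s (F s).
  apply: s_sup.2 => _ [[|n] ->]; first exact: b_bot.
  by apply: Fs_ub; exists n.
exists s; split; first exact: le_anti.
move=> y Fy; apply: s_sup.2 => _ [n ->]; elim: n => [|n IH]; first exact: b_bot.
by apply: le_trans (F_mono _ _ IH) Fy.
Qed.

End LeastFixpoints.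

Section Bekic.
Variables (X : Type) (le : X -> X -> Prop).
Hypothesis po : is_poset le.

Let le_refl : forall x, le x x := proj1 po.
Let le_anti : forall x y, le x y -> le y x -> x = y := proj1 (proj2 po).
Let le_trans : forall x y z, le x y -> le y z -> le x z := proj2 (proj2 po).

Definition le2 (p q : X * X) := le p.1 q.1 /\ le p.2 q.2.

Lemma is_poset_le2 : is_poset le2.
Proof.
split; first by move=> p; split.
split; first by move=> [? ?] [? ?] [/= ? ?] [/= ? ?]; congr pair; exact: le_anti.
by move=> p q r [? ?] [? ?]; split; apply: le_trans; eassumption.
Qed.

Definition monotone2 (f : X -> X -> X) :=
  forall v v' w w', le v v' -> le w w' -> le (f v w) (f v' w').

Definition pair_map (f g : X -> X -> X) (p : X * X) := (f p.1 p.2, g p.1 p.2).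

Definition bekic_hyps (f g : X -> X -> X) :=
  [/\ monotone2 f, monotone2 g, forall v, has_least_prefp le (g v),
      forall w, has_least_prefp le (f^~ w) & has_least_prefp le2 (pair_map f g)].

Lemma bekic f g a b h k : monotone2 f -> monotone2 g ->
  is_least_prefp le2 (pair_map f g) (a, b) ->
  (forall v, is_least_prefp le (g v) (h v)) ->
  (forall w, is_least_prefp le (f^~ w) (k w)) ->
  [/\ is_least_prefp le (fun v => f v (h v)) a,
      is_least_prefp le (fun w => g (k w) w) b, h a = b & k b = a].
Proof.
move=> f_mono g_mono [[/= fab gab] ab_least] h_lfp k_lfp.
have ha : h a = b.
  have h_le_b : le (h a) b by apply: (h_lfp a).2; rewrite gab.
  apply: le_anti => //; suff [] : le2 (a, b) (a, h a) by [].
  apply: ab_least; split => /=.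
    by rewrite -[X in le _ X]fab; apply: f_mono.
  by rewrite (h_lfp a).1.
have kb : k b = a.
  have k_le_a : le (k b) a by apply: (k_lfp b).2; rewrite /= fab.
  apply: le_anti => //; suff [] : le2 (a, b) (k b, b) by [].
  apply: ab_least; split => /=.
    by rewrite (k_lfp b).1.
  by rewrite -[X in le _ X]gab; apply: g_mono.
split => //.
- split=> [|v fv]; first by rewrite ha.
  suff [] : le2 (a, b) (v, h v) by [].
  by apply: ab_least; split; rewrite //= (h_lfp v).1.
- split=> [|w gw]; first by rewrite kb.
  suff [] : le2 (a, b) (k w, w) by [].
  by apply: ab_least; split; rewrite //= (k_lfp w).1.
Qed.

Lemma bekic_lfp_or x0 f g : bekic_hyps f g ->
  let h v := lfp_or le x0 (g v) in
  let k w := lfp_or le x0 (f^~ w) in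
  let a := lfp_or le x0 (fun v => f v (h v)) in
  let b := lfp_or le x0 (fun w => g (k w) w) in
  (a, h a) = (k b, b).
Proof.
move=> [f_mono g_mono h_ex k_ex [[a b] ab_least]] h k.
have h_lfp v : is_least_prefp le (g v) (h v).
  by have [c c_lfp] := h_ex v; rewrite /h (lfp_or_least_prefp po x0 c_lfp).
have k_lfp w : is_least_prefp le (f^~ w) (k w).
  by have [c c_lfp] := k_ex w; rewrite /k (lfp_or_least_prefp po x0 c_lfp).
have [a_lfp b_lfp ha kb] := bekic f_mono g_mono ab_least h_lfp k_lfp.
by rewrite /= (lfp_or_least_prefp po x0 a_lfp) (lfp_or_least_prefp po x0 b_lfp) ha kb.
Qed.

End Bekic.

Section Suprema.
Variables (X : Type) (le : X -> X -> Prop).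
Hypothesis po : is_poset le.

Let le_refl : forall x, le x x := proj1 po.
Let le_anti : forall x y, le x y -> le y x -> x = y := proj1 (proj2 po).

Lemma is_sup_unique C s s' : is_sup le C s -> is_sup le C s' -> s = s'.
Proof. by move=> [s_ub s_least] [s'_ub s'_least]; apply: le_anti; auto. Qed.

Lemma is_sup_const (x : X) : is_sup le (range (fun=> x)) x.
Proof. by split=> [_ [_ ->] | u]; [apply: le_refl | apply; exists 0]. Qed.

Lemma is_omega_chain_const (x : X) : is_omega_chain le (fun=> x).
Proof. by move=> *; apply: le_refl. Qed.

Lemma is_sup_le2 (c : nat -> X * X) a b :
  is_sup le (range (fun n => (c n).1)) a -> is_sup le (range (fun n => (c n).2)) b ->
  is_sup (le2 le) (range c) (a, b).
Proof.
move=> [a_ub a_least] [b_ub b_least]; split.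
  by move=> _ [n ->]; split; [apply: a_ub | apply: b_ub]; exists n.
move=> u u_ub; split.
  by apply: a_least => _ [n ->]; apply: (u_ub (c n) (ex_intro _ n erefl)).1.
by apply: b_least => _ [n ->]; apply: (u_ub (c n) (ex_intro _ n erefl)).2.
Qed.

Lemma is_sup_lefP (A : eqType) (c : nat -> A -> X) (s : A -> X) :
  is_sup (lef le) (range c) s <-> forall a, is_sup le (range (c^~ a)) (s a).
Proof.
split=> [[s_ub s_least] a | s_sup].
  split=> [_ [n ->] | u u_ub]; first by apply: (s_ub (c n)); exists n.
  pose s' b := if b == a then u else s b.
  suff : lef le s s' by move=> /(_ a); rewrite /s' eqxx.
  apply: s_least => _ [n ->] b; rewrite /s'; case: eqP => [->|_].
    by apply: u_ub; exists n.
  by apply: (s_ub (c n)); exists n.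
split=> [_ [n ->] a | u u_ub a]; first by apply: (s_sup a).1; exists n.
by apply: (s_sup a).2 => _ [n ->]; apply: (u_ub (c n)); exists n.
Qed.

End Suprema.

Section BekicHypotheses.
Variables (X : Type) (le : X -> X -> Prop).
Hypothesis po : is_poset le.

Let le_refl : forall x, le x x := proj1 po.

Lemma pair_map_mono f g : monotone2 le f -> monotone2 le g ->
  forall p q, le2 le p q -> le2 le (pair_map f g p) (pair_map f g q).
Proof. by move=> f_mono g_mono p q [? ?]; split; [apply: f_mono | apply: g_mono]. Qed.

Lemma is_CPO_le2 : is_CPO le -> is_CPO (le2 le).
Proof.
move=> cpo C C_chain.
have [|a [a_ub a_least]] := cpo (fun x => exists y, C (x, y)).
  move=> x x' [y Cxy] [y' Cxy'].
  by case: (C_chain _ _ Cxy Cxy') => -[? _]; [left|right].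
have [|b [b_ub b_least]] := cpo (fun y => exists x, C (x, y)).
  move=> y y' [x Cxy] [x' Cxy'].
  by case: (C_chain _ _ Cxy Cxy') => -[_ ?]; [left|right].
exists (a, b); split=> [[x y] Cxy | u u_ub].
  by split; [apply: a_ub; exists y | apply: b_ub; exists x].
split; first by apply: a_least => x [y /u_ub []].
by apply: b_least => y [x /u_ub []].
Qed.

Lemma CPO_bekic_hyps f g : is_CPO le -> monotone2 le f -> monotone2 le g ->
  bekic_hyps le f g.
Proof.
move=> cpo f_mono g_mono; split => //.
- by move=> v; apply: (CPO_least_prefp po) => // w w' ww'; apply: g_mono.
- by move=> w; apply: (CPO_least_prefp po) => // v v' vv'; apply: f_mono.
- apply: (CPO_least_prefp (is_poset_le2 po)); last exact: is_CPO_le2.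
  exact: pair_map_mono.
Qed.

Definition continuous2 (f : X -> X -> X) :=
  forall vn wn, is_omega_chain le vn -> is_omega_chain le wn ->
  forall v w, is_sup le (range vn) v -> is_sup le (range wn) w ->
  is_sup le (range (fun n => f (vn n) (wn n))) (f v w).

Lemma omegaCPO_bekic_hyps f g : is_omegaCPO le ->
  monotone2 le f -> monotone2 le g -> continuous2 f -> continuous2 g ->
  bekic_hyps le f g.
Proof.
move=> [[bot bot_le] sups] f_mono g_mono f_cont g_cont; split => //.
- move=> v; apply: (omegaCPO_least_prefp po _ bot_le sups).
    by move=> w w' ww'; apply: g_mono.
  move=> c c_chain s s_sup.
  exact: g_cont (is_omega_chain_const po v) c_chain _ _ (is_sup_const po v) s_sup.
- move=> w; apply: (omegaCPO_least_prefp po _ bot_le sups).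
    by move=> v v' vv'; apply: f_mono.
  move=> c c_chain s s_sup.
  exact: f_cont c_chain (is_omega_chain_const po w) _ _ s_sup (is_sup_const po w).
have chain_proj (c : nat -> X * X) : is_omega_chain (le2 le) c ->
    is_omega_chain le (fun n => (c n).1) /\ is_omega_chain le (fun n => (c n).2).
  by move=> c_chain; split=> i j ij; have [] := c_chain i j ij.
have chain_sup (c : nat -> X * X) : is_omega_chain (le2 le) c ->
    exists a b, [/\ is_sup le (range (fun n => (c n).1)) a,
       is_sup le (range (fun n => (c n).2)) b & is_sup (le2 le) (range c) (a, b)].
  move=> /chain_proj[c1_chain c2_chain].
  have [a a_sup] := sups _ c1_chain; have [b b_sup] := sups _ c2_chain.
  by exists a, b; split => //; apply: is_sup_le2.
apply: (omegaCPO_least_prefp (is_poset_le2 po) (b := (bot, bot))).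
- exact: pair_map_mono.
- by move=> y; split; apply: bot_le.
- by move=> c /chain_sup[a [b [_ _ ab_sup]]]; exists (a, b).
move=> c c_chain s s_sup; have [c1_chain c2_chain] := chain_proj c c_chain.
have [a [b [a_sup b_sup ab_sup]]] := chain_sup c c_chain.
rewrite (is_sup_unique (is_poset_le2 po) s_sup ab_sup).
by apply: is_sup_le2; [apply: f_cont | apply: g_cont].
Qed.

End BekicHypotheses.

Section Systems.
Variables (L : choiceType) (X : Type).
Local Open Scope fset_scope.

Implicit Types (s : system L X) (i o : L).

Definition agree (A B : {fset L}) (x : A -> X) (y : B -> X) :=
  forall j j', fsval j = fsval j' -> x j = y j'.

Lemma system_eq s t : sI s = sI t -> sO s = sO t ->
  (forall x y, agree x y -> agree (sf s x) (sf t y)) -> s = t.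
Proof.
case: s => I O f; case: t => I' O' f' /= eI eO; subst I' O' => ff'; congr Sys.
apply: functional_extensionality => x; apply: functional_extensionality => k.
by apply: ff' => // j j' /val_inj ->.
Qed.

Lemma ext_new (I : {fset L}) i (x : I `\ i -> X) v (j : I) : fsval j = i -> ext x v j = v.
Proof. by move=> ji; rewrite /ext; case: insubP => // u; rewrite in_fsetD1 ji eqxx. Qed.

Lemma ext_old (I : {fset L}) i (x : I `\ i -> X) v (j : I) (h : fsval j \in I `\ i) :
  ext x v j = x [` h].
Proof. by rewrite /ext insubT. Qed.

Lemma splitU_l (A B : {fset L}) (k : A `|` B) (h : fsval k \in A) : splitU k = inl [` h].
Proof.
rewrite /splitU; move: (erefl (fsval k \in A)).
generalize (fsval k \in A) at 2 3; case=> e; last by have := e; rewrite h.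
by congr inl; apply: val_inj.
Qed.

Lemma splitU_r (A B : {fset L}) (k : A `|` B) (h : (fsval k \in A) = false) :
  splitU k = inr [` memU_notl (fsvalP k) h].
Proof.
rewrite /splitU; move: (erefl (fsval k \in A)).
generalize (fsval k \in A) at 2 3; case=> e; first by have := e; rewrite h.
by congr inr; apply: val_inj.
Qed.

Lemma parE_l s1 s2 x k (h : fsval k \in sO s1) :
  sf (par s1 s2) x k = sf s1 (resl x) [` h].
Proof. by rewrite /par /= (splitU_l h). Qed.

Lemma parE_r s1 s2 x k (h : (fsval k \in sO s1) = false) :
  sf (par s1 s2) x k = sf s2 (resr x) [` memU_notl (fsvalP k) h].
Proof. by rewrite /par /= (splitU_r h). Qed.

Lemma gammaE le x0 s i o (ho : o \in sO s) x k :
  sf (gamma le x0 s i o) x k =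
  sf s (ext x (lfp_or le x0 (fun w => sf s (ext x w) [` ho]))) [` memD1 (fsvalP k)].
Proof. by rewrite /gamma /= insubT. Qed.

Lemma sf_agree s (x y : sI s -> X) k k' :
  agree x y -> fsval k = fsval k' -> sf s x k = sf s y k'.
Proof.
move=> xy /val_inj <-; congr (sf s _ _).
by apply: functional_extensionality => j; apply: xy.
Qed.

Lemma par_comm s1 s2 : [disjoint sO s1 & sO s2] -> par s1 s2 = par s2 s1.
Proof.
move=> d; apply: system_eq; [exact: fsetUC | exact: fsetUC |] => x y xy k k' kk'.
case k1: (fsval k \in sO s1).
- have k2 : (fsval k' \in sO s2) = false by rewrite -kk'; apply/negbTE/(fdisjointP d).
  by rewrite (parE_l _ k1) (parE_r _ k2); apply: sf_agree => // j j' e; apply: xy.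
- have k2 : fsval k' \in sO s2 by have := fsvalP k'; rewrite /= in_fsetU -kk' k1 orbF.
  by rewrite (parE_r _ k1) (parE_l _ k2); apply: sf_agree => // j j' e; apply: xy.
Qed.

Lemma par_assoc s1 s2 s3 : par (par s1 s2) s3 = par s1 (par s2 s3).
Proof.
apply: system_eq; [by rewrite /= fsetUA | by rewrite /= fsetUA | move=> x y xy k k' kk'].
case k1: (fsval k \in sO s1).
- have k12 : fsval k \in sO s1 `|` sO s2 by rewrite in_fsetU k1.
  have k1' : fsval k' \in sO s1 by rewrite -kk'.
  rewrite (parE_l _ k12) (parE_l (k := [` k12]) _ k1) (parE_l _ k1').
  by apply: sf_agree => // j j' e; apply: xy.
have k1' : (fsval k' \in sO s1) = false by rewrite -kk'.
rewrite (parE_r _ k1'); case k2: (fsval k \in sO s2).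
- have k12 : fsval k \in sO s1 `|` sO s2 by rewrite in_fsetU k2 orbT.
  have k2' : fsval k' \in sO s2 by rewrite -kk'.
  rewrite (parE_l _ k12) (parE_r (k := [` k12]) _ k1).
  rewrite (parE_l (k := [` memU_notl (fsvalP k') k1']) _ k2').
  by apply: sf_agree => // j j' e; apply: xy.
- have k12 : (fsval k \in sO s1 `|` sO s2) = false by rewrite in_fsetU k1 k2.
  have k2' : (fsval k' \in sO s2) = false by rewrite -kk'.
  rewrite (parE_r _ k12) (parE_r (k := [` memU_notl (fsvalP k') k1']) _ k2').
  by apply: sf_agree => // j j' e; apply: xy.
Qed.

Lemma par_gamma le x0 s1 s2 i o : [disjoint sO s1 & sO s2] -> i \notin sI s2 ->
  o \in sO s1 -> par (gamma le x0 s1 i o) s2 = gamma le x0 (par s1 s2) i o.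
Proof.
move=> d i2 o1; have o2 : o \notin sO s2 by apply: (fdisjointP d).
apply: system_eq.
- apply/fsetP => z; rewrite /= !(in_fsetU, in_fsetD1).
  by case: (eqVneq z i) => [->|]; rewrite ?(negbTE i2).
- apply/fsetP => z; rewrite /= !(in_fsetU, in_fsetD1).
  by case: (eqVneq z o) => [->|]; rewrite ?(negbTE o2).
move=> x y xy k k' kk'.
have o12 : o \in sO (par s1 s2) by rewrite /= in_fsetU o1.
rewrite (gammaE o12); case k1: (fsval k \in sO s1 `\ o).
- have k1' : fsval k' \in sO s1 by move: k1; rewrite kk' in_fsetD1 => /andP[].
  rewrite (parE_l _ k1) (gammaE o1) (parE_l (k := [` memD1 (fsvalP k')]) _ k1').
  have resl_ext w : resl (ext y w) = ext (resl x) w.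
    apply: functional_extensionality => j; case: (eqVneq (fsval j) i) => ji.
      by rewrite /resl !ext_new.
    have j1 : fsval j \in sI s1 `\ i by rewrite in_fsetD1 ji fsvalP.
    have j12 : fsval j \in (sI s1 `|` sI s2) `\ i by rewrite in_fsetD1 ji in_fsetU fsvalP.
    rewrite (ext_old _ _ j1) /resl (ext_old (j := [` memUl _ (fsvalP j)]) _ _ j12).
    by symmetry; apply: xy.
  have -> : (fun w => sf (par s1 s2) (ext y w) [` o12]) =
            (fun w => sf s1 (ext (resl x) w) [` o1]).
    apply: functional_extensionality => w.
    by rewrite (parE_l (k := [` o12]) _ o1) resl_ext.
  by rewrite resl_ext; congr (sf s1 _ _); apply: val_inj.
- have k2 : fsval k' \in sO s2 by have := fsvalP k; rewrite /= in_fsetU k1 -kk'.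
  have k1' : (fsval k' \in sO s1) = false.
    by apply/negbTE; rewrite fdisjoint_sym in d; apply: (fdisjointP d).
  rewrite (parE_r _ k1) (parE_r (k := [` memD1 (fsvalP k')]) _ k1').
  apply: sf_agree => // j j' jj'.
  have j12 : fsval j' \in (sI s1 `|` sI s2) `\ i.
    by rewrite in_fsetD1 in_fsetU fsvalP orbT andbT; apply: contraNneq i2 => <-.
  by rewrite /resr (ext_old (j := [` memUr _ (fsvalP j')]) _ _ j12); apply: xy.
Qed.

End Systems.

Section Feedback.
Variables (L : choiceType) (X : Type) (le : X -> X -> Prop).
Hypothesis po : is_poset le.
Local Open Scope fset_scope.

Implicit Types (s : system L X) (i o : L).

Let le_refl : forall x, le x x := proj1 po.

(* [E v w] models an input of a system in which two inputs are fed back the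
   values [v] and [w]; [bekic_sections s] asks for the hypotheses of Bekic's
   lemma for any two outputs of [s] seen as functions of [v] and [w]. *)
Definition proj_or_const (I : {fset L}) (E : X -> X -> I -> X) :=
  forall j, [\/ forall v w, E v w j = v, forall v w, E v w j = w |
                exists c, forall v w, E v w j = c].

Definition bekic_sections s :=
  forall E : X -> X -> sI s -> X, proj_or_const E -> forall k1 k2 : sO s,
  bekic_hyps le (fun v w => sf s (E v w) k1) (fun v w => sf s (E v w) k2).

Lemma proj_or_const_ext2 (I : {fset L}) i i' (x : (I `\ i) `\ i' -> X) :
  proj_or_const (fun v w => ext (ext x v) w).
Proof.
move=> j; case: (eqVneq (fsval j) i) => ji; first by apply: Or32 => v w; rewrite ext_new.
have j1 : fsval j \in I `\ i by rewrite in_fsetD1 ji fsvalP.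
case: (eqVneq (fsval j) i') => ji'.
  by apply: Or31 => v w; rewrite (ext_old _ _ j1) ext_new.
have j2 : fsval j \in (I `\ i) `\ i' by rewrite in_fsetD1 ji' j1.
apply: Or33; exists (x [` j2]) => v w.
by rewrite (ext_old _ _ j1) (ext_old (j := [` j1]) _ _ j2).
Qed.

Lemma ext_ext_swap (I : {fset L}) i i' (x : (I `\ i) `\ i' -> X)
    (y : (I `\ i') `\ i -> X) v w :
  i != i' -> agree x y -> ext (ext y w) v = ext (ext x v) w.
Proof.
move=> ii' xy; apply: functional_extensionality => j.
case: (eqVneq (fsval j) i) => ji.
  have j1 : fsval j \in I `\ i' by rewrite in_fsetD1 ji ii' -ji fsvalP.
  by rewrite (ext_old _ _ j1) !ext_new.
have j1 : fsval j \in I `\ i by rewrite in_fsetD1 ji fsvalP.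
case: (eqVneq (fsval j) i') => ji'; first by rewrite (ext_old _ _ j1) !ext_new.
have j1' : fsval j \in I `\ i' by rewrite in_fsetD1 ji' fsvalP.
have j2 : fsval j \in (I `\ i) `\ i' by rewrite in_fsetD1 ji' j1.
have j2' : fsval j \in (I `\ i') `\ i by rewrite in_fsetD1 ji j1'.
rewrite (ext_old _ _ j1) (ext_old (j := [` j1]) _ _ j2).
by rewrite (ext_old _ _ j1') (ext_old (j := [` j1']) _ _ j2'); symmetry; apply: xy.
Qed.

Lemma gamma2E x0 s i o i' o' (o_out : o \in sO s) (o'_out : o' \in sO s `\ o)
    (x : (sI s `\ i) `\ i' -> X) (E : X -> X -> sI s -> X) k :
  (forall v w, ext (ext x v) w = E v w) ->
  let h v := lfp_or le x0 (fun w => sf s (E v w) [` o_out]) in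
  let a := lfp_or le x0 (fun v => sf s (E v (h v)) [` memD1 o'_out]) in
  sf (gamma le x0 (gamma le x0 s i o) i' o') x k =
  sf s (E a (h a)) [` memD1 (memD1 (fsvalP k))].
Proof.
move=> xE h a; rewrite (gammaE (s := gamma le x0 s i o) o'_out) (gammaE o_out).
have -> : (fun v => sf (gamma le x0 s i o) (ext x v) [` o'_out]) =
          (fun v => sf s (E v (h v)) [` memD1 o'_out]).
  apply: functional_extensionality => v; rewrite (gammaE o_out) /h.
  under boolp.eq_fun do rewrite xE.
  by rewrite xE; congr (sf s _ _); apply: val_inj.
rewrite -/a; under boolp.eq_fun do rewrite xE.
by rewrite xE; congr (sf s _ _); apply: val_inj.
Qed.

Lemma gamma_comm x0 s i o i' o' : bekic_sections s ->
  inGamma s i o -> inGamma (gamma le x0 s i o) i' o' ->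
  [/\ inGamma s i' o', inGamma (gamma le x0 s i' o') i o &
      gamma le x0 (gamma le x0 s i o) i' o' = gamma le x0 (gamma le x0 s i' o') i o].
Proof.
move=> s_bekic [i_in o_out] [/= i'_in o'_out].
have [i'i i'_in_s] : i' != i /\ i' \in sI s by apply/andP; rewrite -in_fsetD1.
have [o'o o'_in_s] : o' != o /\ o' \in sO s by apply/andP; rewrite -in_fsetD1.
have i_in' : i \in sI s `\ i' by rewrite in_fsetD1 eq_sym i'i.
have o_out' : o \in sO s `\ o' by rewrite in_fsetD1 eq_sym o'o.
split => //; apply: system_eq; try by rewrite /= !fsetDDl fsetUC.
move=> x y xy k k' kk'.
pose E v w := ext (ext x v) w.
have E_swap v w : ext (ext y w) v = E v w by apply: ext_ext_swap; rewrite // eq_sym.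
rewrite (gamma2E o_out o'_out (E := E)) //.
rewrite (gamma2E o'_in_s o_out' (E := fun w v => E v w)) //=.
have -> : [` o'_in_s] = [` memD1 o'_out] :> sO s by apply: val_inj.
have -> : [` memD1 o_out'] = [` o_out] :> sO s by apply: val_inj.
have [a_kb ha_b] :=
  bekic_lfp_or po x0 (s_bekic E (proj_or_const_ext2 x) [` memD1 o'_out] [` o_out]).
rewrite ha_b a_kb; congr (sf s _ _); exact: val_inj.
Qed.

Lemma proj_or_const_mono (I : {fset L}) (E : X -> X -> I -> X) : proj_or_const E ->
  forall v v' w w', le v v' -> le w w' -> lef le (E v w) (E v' w').
Proof.
by move=> E_poc v v' w w' vv' ww' j; case: (E_poc j) => [Ej|Ej|[c Ej]]; rewrite !Ej.
Qed.

Lemma proj_or_const_sup (I : {fset L}) (E : X -> X -> I -> X) vn wn v w :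
  proj_or_const E -> is_sup le (range vn) v -> is_sup le (range wn) w ->
  is_sup (lef le) (range (fun n => E (vn n) (wn n))) (E v w).
Proof.
move=> E_poc v_sup w_sup; apply/is_sup_lefP => j.
case: (E_poc j) => [Ej|Ej|[c Ej]]; rewrite Ej.
- by under boolp.eq_fun do under boolp.eq_exists do rewrite Ej.
- by under boolp.eq_fun do under boolp.eq_exists do rewrite Ej.
- by under boolp.eq_fun do under boolp.eq_exists do rewrite Ej; apply: is_sup_const.
Qed.

Lemma monotone_bekic_sections s : is_CPO le -> monotone_fun le (sf s) -> bekic_sections s.
Proof.
move=> cpo s_mono E E_poc k1 k2.
by apply: CPO_bekic_hyps => // v v' w w' vv' ww'; apply: s_mono; apply: proj_or_const_mono.
Qed.

Lemma omega_continuous_monotone (A B : Type) (F : (A -> X) -> B -> X) :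
  omega_continuous_fun le F -> monotone_fun le F.
Proof.
move=> F_cont x y xy; pose c n := if n is 0 then x else y.
have c_chain : is_omega_chain (lef le) c by move=> [|i] [|j] //= _ a.
have c_sup : is_sup (lef le) (range c) y.
  by split=> [_ [[|n] ->] a // | u]; apply; exists 1.
by apply: (F_cont c c_chain y c_sup).1; exists 0.
Qed.

Lemma continuous_bekic_sections s :
  is_omegaCPO le -> omega_continuous_fun le (sf s) -> bekic_sections s.
Proof.
move=> ocpo s_cont E E_poc k1 k2; have s_mono := omega_continuous_monotone s_cont.
have sf_mono k : monotone2 le (fun v w => sf s (E v w) k).
  by move=> v v' w w' vv' ww'; apply: s_mono; apply: proj_or_const_mono.
have sf_cont k : continuous2 le (fun v w => sf s (E v w) k).
  move=> vn wn vn_chain wn_chain v w v_sup w_sup.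
  have E_chain : is_omega_chain (lef le) (fun n => E (vn n) (wn n)).
    by move=> m n mn; apply: proj_or_const_mono; [|apply: vn_chain|apply: wn_chain].
  have := s_cont _ E_chain _ (proj_or_const_sup E_poc v_sup w_sup).
  by move/is_sup_lefP/(_ k).
exact: omegaCPO_bekic_hyps.
Qed.

End Feedback.

Lemma disjoint_lam_sI (L : choiceType) (X : Type) (s1 s2 : system L X) :
  [disjoint lam s1 & lam s2]%fset -> [disjoint sI s1 & sI s2]%fset.
Proof. by move=> d; apply: fdisjointWl (fsubsetUl _ _) (fdisjointWr (fsubsetUl _ _) d). Qed.

Lemma disjoint_lam_sO (L : choiceType) (X : Type) (s1 s2 : system L X) :
  [disjoint lam s1 & lam s2]%fset -> [disjoint sO s1 & sO s2]%fset.
Proof. by move=> d; apply: fdisjointWl (fsubsetUr _ _) (fdisjointWr (fsubsetUr _ _) d). Qed.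

Lemma composition_order_invariant_bekic (L : choiceType) (X : Type)
    (le : X -> X -> Prop) (x0 : X) (P : system L X -> Prop) :
  is_poset le -> (forall s, P s -> bekic_sections le s) ->
  composition_order_invariant le x0 P.
Proof.
move=> po P_bekic; split; first by move=> s /P_bekic s_bekic *; apply: gamma_comm.
split; first by move=> s1 s2 _ _ /disjoint_lam_sO; apply: par_comm.
split; first by move=> *; apply: par_assoc.
move=> s1 s2 i o _ _ d [i1 o1]; apply: par_gamma o1; first exact: disjoint_lam_sO.
exact: (fdisjointP (disjoint_lam_sI d)).
Qed.

Theorem theorem5p8 (L : choiceType) (X : Type) (le : X -> X -> Prop) :
  is_poset le -> nonempty_chain_inf le ->
  (is_CPO le ->
     forall x0 : X, composition_order_invariant le x0 (@monotone_sys L X le)) /\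
  (is_omegaCPO le ->
     forall x0 : X, composition_order_invariant le x0 (@continuous_sys L X le)).
Proof.
move=> po _; split=> [cpo | ocpo] x0;
  apply: composition_order_invariant_bekic => // s [_ s_fun].
- exact: monotone_bekic_sections.
- exact: continuous_bekic_sections.
Qed.
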